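(* Let $m\ge n$, $B\in\mathbb R^{n\times m}$ of full row rank, $f,h$ convex and continuously differentiable with Lipschitz gradients, $\mathcal L(u,p)=f(u)-h(p)+(Bu,p)$ with saddle point $(u^*,p^* )$, and $T_{\mathcal U},\mathcal I_{\mathcal V}$ ($m\times m$), $T_{\mathcal P},\mathcal I_{\mathcal Q}$ ($n\times n$) symmetric positive definite. Suppose $h\in\mathcal S^{1,1}_{\mu_{h,T_{\mathcal P}},L_{h,T_{\mathcal P}}}$ w.r.t. $T_{\mathcal P}$ with $L_{h,T_{\mathcal P}}\le1$, $f\in\mathcal S^{1,1}_{\mu_{f,T_{\mathcal U}},L_{f,T_{\mathcal U}}}$ w.r.t. $T_{\mathcal U}$ with $L_{f,T_{\mathcal U}}\le1$, $f_B$ is strongly convex w.r.t. $\mathcal I_{\mathcal V}$ with $\mu_{f_B,\mathcal I_{\mathcal V}}>0$, and $h_B$ is strongly convex w.r.t. $\mathcal I_{\mathcal Q}$ with $\mu_{h_B,\mathcal I_{\mathcal Q}}>0$. Let $(u_k,p_k)$ be generated from $(u_0,p_0)$ by $$u_{k+1/2}=u_k-T_{\mathcal U}^{-1}(\nabla f(u_k)+B^\top p_k),\quad p_{k+1}=p_k-\alpha_k\mathcal I_{\mathcal Q}^{-1}(\nabla h(p_k)-Bu_{k+1/2}),\quad u_{k+1}=\arg\min_{u\in\mathbb R^m}\tilde f_B(u;u_k,p_{k+1}),$$ where $\tilde f_B(u;u_k,p_{k+1})=f_B(u)+\frac1{2\alpha_k}\|u-u_k+\alpha_k\mathcal I_{\mathcal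 V}^{-1}B^\top(p_{k+1}-T_{\mathcal P}^{-1}\nabla h(p_{k+1}))\|^2_{\mathcal I_{\mathcal V}}$. Then for $0<\alpha_k<\mu_{h_B,\mathcal I_{\mathcal Q}}/L_{S,\mathcal Q}^2$, $$\mathcal E(u_{k+1},p_{k+1})\le\frac1{1+\alpha_k\mu_k}\mathcal E(u_k,p_k),\qquad \mu_k=\min\{\mu_{f_B,\mathcal I_{\mathcal V}},\ \mu_{h_B,\mathcal I_{\mathcal Q}}-\alpha_kL_{S,\mathcal Q}^2\},$$ where $L_{S,\mathcal Q}^2=L_{h_B,\mathcal I_{\mathcal Q}}^2+L_{e_{\mathcal U},\mathcal I_{\mathcal V}}^2L_S^2$. In particular, for $\alpha_k=0.5\mu_{h_B,\mathcal I_{\mathcal Q}}/L_{S,\mathcal Q}^2$, $$\mathcal E(u_{k+1},p_{k+1})\le\frac{1}{1+0.5\,\mu_{h_B,\mathcal I_{\mathcal Q}}\min\{\mu_{f_B,\mathcal I_{\mathcal V}},\mu_{h_B,\mathcal I_{\mathcal Q}}/2\}/L_{S,\mathcal Q}^2}\mathcal E(u_k,p_k).$$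
   Context: A saddle point satisfies $\nabla f(u^* )+B^\top p^*=0$, $Bu^*=\nabla h(p^* )$. For SPD $M$, $\|x\|_M=(Mx,x)^{1/2}$; $D_g(y,x)=g(y)-g(x)-(\nabla g(x),y-x)$; $g\in\mathcal S^{1,1}_{\mu_{g,M},L_{g,M}}$ w.r.t. $M$ means $\frac{\mu_{g,M}}2\|x-y\|_M^2\le D_g(y,x)\le\frac{L_{g,M}}2\|x-y\|_M^2$ for all $x,y$. Define $f_B(u)=f(u)+\frac12(B^\top T_{\mathcal P}^{-1}Bu,u)$, $h_B(p)=h(p)+\frac12(BT_{\mathcal U}^{-1}B^\top p,p)$, $e_{\mathcal U}(u)=u-T_{\mathcal U}^{-1}\nabla f(u)$, $\mathcal E(u,p)=\frac12\|u-u^*\|^2_{\mathcal I_{\mathcal V}}+\frac12\|p-p^*\|^2_{\mathcal I_{\mathcal Q}}$. $L_{h_B,\mathcal I_{\mathcal Q}}$ is the Lipschitz constant of $\nabla h_B$ ($\|\nabla h_B(p_1)-\nabla h_B(p_2)\|_{\mathcal I_{\mathcal Q}^{-1}}\le L_{h_B,\mathcal I_{\mathcal Q}}\|p_1-p_2\|_{\mathcal I_{\mathcal Q}}$), $L_{e_{\mathcal U},\mathcal I_{\mathcal V}}$ the Lipschitz constant of $e_{\mathcal U}$ in $\|\cdot\|_{\mathcal I_{\mathcal V}}$, and $L_S^2=\lambda_{\max}(\mathcal I_{\mathcal Q}^{-1}B\mathcal I_{\mathcal V}^{-1}B^\top)$. *)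

From HB Require Import structures.
From mathcomp Require Import all_boot all_order all_algebra.
From mathcomp Require Import all_classical all_reals all_analysis.
Set Implicit Arguments. Unset Strict Implicit. Unset Printing Implicit Defensive.
Import Order.TTheory GRing.Theory Num.Theory.
Import numFieldNormedType.Exports.
Local Open Scope ring_scope.

Definition dotv (R : realType) (k : nat) (x y : 'cV[R]_k) : R := (x^T *m y) 0 0.

Definition spd (R : realType) (k : nat) (M : 'M[R]_k) : Prop :=
  M^T = M /\ forall x : 'cV[R]_k, x != 0 -> 0 < dotv (M *m x) x.

Definition normM (R : realType) (k : nat) (M : 'M[R]_k) (x : 'cV[R]_k) : R :=
  Num.sqrt (dotv (M *m x) x).

Definition C1_with_grad (R : realType) (k : nat) (g : 'cV[R]_k -> R)
    (gg : 'cV[R]_k -> 'cV[R]_k) : Prop :=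
  (forall x v : 'cV[R]_k, is_derive x v g (dotv (gg x) v)) /\ continuous gg.

Definition convex_fun (R : realType) (k : nat) (g : 'cV[R]_k -> R) : Prop :=
  forall (x y : 'cV[R]_k) (t : R), 0 <= t <= 1 ->
    g (t *: x + (1 - t) *: y) <= t * g x + (1 - t) * g y.

(* gradient Lipschitz (w.r.t. some norm; all norms are equivalent in R^k) *)
Definition lipschitz_grad (R : realType) (k : nat) (gg : 'cV[R]_k -> 'cV[R]_k) : Prop :=
  exists L : R, forall x y, `|gg x - gg y| <= L * `|x - y|.

Definition bregman (R : realType) (k : nat) (g : 'cV[R]_k -> R)
    (gg : 'cV[R]_k -> 'cV[R]_k) (y x : 'cV[R]_k) : R :=
  g y - g x - dotv (gg x) (y - x).

Definition S11 (R : realType) (k : nat) (M : 'M[R]_k) (mu L : R)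
    (g : 'cV[R]_k -> R) (gg : 'cV[R]_k -> 'cV[R]_k) : Prop :=
  forall x y : 'cV[R]_k,
    mu / 2 * normM M (x - y) ^+ 2 <= bregman g gg y x /\
    bregman g gg y x <= L / 2 * normM M (x - y) ^+ 2.

Definition strongly_convex_wrt (R : realType) (k : nat) (M : 'M[R]_k) (mu : R)
    (g : 'cV[R]_k -> R) (gg : 'cV[R]_k -> 'cV[R]_k) : Prop :=
  forall x y : 'cV[R]_k, mu / 2 * normM M (x - y) ^+ 2 <= bregman g gg y x.

Definition lipschitz_wrt (R : realType) (k l : nat) (M1 : 'M[R]_k) (M2 : 'M[R]_l)
    (F : 'cV[R]_k -> 'cV[R]_l) (L : R) : Prop :=
  forall x y, normM M2 (F x - F y) <= L * normM M1 (x - y).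

Definition lipschitz_const (R : realType) (k l : nat) (M1 : 'M[R]_k) (M2 : 'M[R]_l)
    (F : 'cV[R]_k -> 'cV[R]_l) (L : R) : Prop :=
  lipschitz_wrt M1 M2 F L /\ forall L', lipschitz_wrt M1 M2 F L' -> L <= L'.

Definition lambda_max (R : realType) (k : nat) (A : 'M[R]_k) (lam : R) : Prop :=
  eigenvalue A lam /\ forall a, eigenvalue A a -> a <= lam.

Definition fB (R : realType) (m n : nat) (f : 'cV[R]_m -> R) (B : 'M[R]_(n, m))
    (TP : 'M[R]_n) (u : 'cV[R]_m) : R :=
  f u + 1 / 2 * dotv (B^T *m invmx TP *m B *m u) u.
Definition grad_fB (R : realType) (m n : nat) (gf : 'cV[R]_m -> 'cV[R]_m)
    (B : 'M[R]_(n, m)) (TP : 'M[R]_n) (u : 'cV[R]_m) : 'cV[R]_m :=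
  gf u + B^T *m invmx TP *m B *m u.

Definition hB (R : realType) (m n : nat) (h : 'cV[R]_n -> R) (B : 'M[R]_(n, m))
    (TU : 'M[R]_m) (p : 'cV[R]_n) : R :=
  h p + 1 / 2 * dotv (B *m invmx TU *m B^T *m p) p.
Definition grad_hB (R : realType) (m n : nat) (gh : 'cV[R]_n -> 'cV[R]_n)
    (B : 'M[R]_(n, m)) (TU : 'M[R]_m) (p : 'cV[R]_n) : 'cV[R]_n :=
  gh p + B *m invmx TU *m B^T *m p.

Definition eU (R : realType) (m : nat) (gf : 'cV[R]_m -> 'cV[R]_m) (TU : 'M[R]_m)
    (u : 'cV[R]_m) : 'cV[R]_m :=
  u - invmx TU *m gf u.

Definition Lyap (R : realType) (m n : nat) (IV : 'M[R]_m) (IQ : 'M[R]_n)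
    (us : 'cV[R]_m) (ps : 'cV[R]_n) (u : 'cV[R]_m) (p : 'cV[R]_n) : R :=
  1 / 2 * normM IV (u - us) ^+ 2 + 1 / 2 * normM IQ (p - ps) ^+ 2.

Definition tfB (R : realType) (m n : nat) (f : 'cV[R]_m -> R)
    (gh : 'cV[R]_n -> 'cV[R]_n) (B : 'M[R]_(n, m)) (TP : 'M[R]_n) (IV : 'M[R]_m)
    (alpha : R) (uk : 'cV[R]_m) (pk1 : 'cV[R]_n) (u : 'cV[R]_m) : R :=
  fB f B TP u + 1 / (2 * alpha) *
    normM IV (u - uk + alpha *: (invmx IV *m B^T *m (pk1 - invmx TP *m gh pk1))) ^+ 2.

(* With du = u_{k+1} - u* and
   dp = p_{k+1} - p*, the three-point identity for the two energy norms, the optimality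
   condition of the u-step and the saddle-point equations give
     E_k - E_{k+1} = alpha M + |u_{k+1} - u_k|^2/2 + |p_{k+1} - p_k|^2/2 - alpha r,
   where M pairs the stabilised saddle operator with (du, dp), and r collects the
   increments of grad h_B and e_U between steps k and k+1 caused by the explicit p-step.
   The cross terms (dp, B du) of M cancel and the others combine into two squares thanks
   to co-coercivity of grad f and grad h (1-smoothness), so
   M >= (mu_fB |du|^2 + mu_hB |dp|^2)/2. The Lipschitz constants and Young's inequality
   bound alpha r by the two squared increments plus alpha^2 L_SQ^2 |dp|^2/2, where L_S^2
   bounds B I_V^-1 B^T by I_Q through the Rayleigh quotient of the pencil. *)

From HB Require Import structures.
From mathcomp Require Import all_boot all_order all_algebra.
From mathcomp Require Import all_classical all_reals all_analysis.
From mathcomp Require Import ring lra.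
Import Order.TTheory GRing.Theory Num.Theory.
Import numFieldNormedType.Exports.
Local Open Scope classical_set_scope.
Local Open Scope ring_scope.

Set Implicit Arguments. Unset Strict Implicit.

Section InnerProduct.
Variables (R : realType) (k : nat).
Implicit Types (x y z : 'cV[R]_k).

Lemma dotvC x y : dotv x y = dotv y x.
Proof. by rewrite /dotv !mxE; apply: eq_bigr => i _; rewrite !mxE mulrC. Qed.

Lemma dotvDl x y z : dotv (x + y) z = dotv x z + dotv y z.
Proof. by rewrite /dotv linearD mulmxDl mxE. Qed.

Lemma dotvDr x y z : dotv z (x + y) = dotv z x + dotv z y.
Proof. by rewrite /dotv mulmxDr mxE. Qed.

Lemma dotvZl a x z : dotv (a *: x) z = a * dotv x z.
Proof. by rewrite /dotv linearZ /= -scalemxAl mxE. Qed.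

Lemma dotvZr a x z : dotv z (a *: x) = a * dotv z x.
Proof. by rewrite /dotv -scalemxAr mxE. Qed.

Lemma dotvNl x z : dotv (- x) z = - dotv x z.
Proof. by rewrite -scaleN1r dotvZl mulN1r. Qed.

Lemma dotvNr x z : dotv z (- x) = - dotv z x.
Proof. by rewrite -scaleN1r dotvZr mulN1r. Qed.

Lemma dotvBl x y z : dotv (x - y) z = dotv x z - dotv y z.
Proof. by rewrite dotvDl dotvNl. Qed.

Lemma dotvBr x y z : dotv z (x - y) = dotv z x - dotv z y.
Proof. by rewrite dotvDr dotvNr. Qed.

Lemma dotv0l z : dotv 0 z = 0.
Proof. by rewrite /dotv linear0 mul0mx mxE. Qed.

Lemma dotv0r z : dotv z 0 = 0.
Proof. by rewrite /dotv mulmx0 mxE. Qed.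

Lemma dotv_eq0 x : (dotv x x == 0) = (x == 0).
Proof.
apply/idP/eqP => [|->]; last by rewrite dotv0l.
rewrite /dotv mxE psumr_eq0 => [/allP x0|i _]; last by rewrite mxE -expr2 sqr_ge0.
apply/matrixP => i j; rewrite (ord1 j) !mxE.
by have := x0 i (mem_index_enum _); rewrite mxE -expr2 sqrf_eq0 => /eqP.
Qed.

End InnerProduct.

Lemma dotv_mulmx (R : realType) k l (A : 'M[R]_(k, l)) x y :
  dotv (A *m x) y = dotv x (A^T *m y).
Proof. by rewrite /dotv trmx_mul mulmxA. Qed.

Lemma sym_polarization (R : realType) k (M : 'M[R]_k) x y : M^T = M ->
  dotv (M *m (x + y)) (x + y) =
  dotv (M *m x) x + 2 * dotv (M *m x) y + dotv (M *m y) y.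
Proof.
move=> Ms; rewrite mulmxDr !dotvDl !dotvDr (dotv_mulmx M y x) Ms (dotvC y (M *m x)).
ring.
Qed.

Lemma normM_ge0 (R : realType) k (M : 'M[R]_k) x : 0 <= normM M x.
Proof. exact: sqrtr_ge0. Qed.

Lemma normMB (R : realType) k (M : 'M[R]_k) (x y : 'cV[R]_k) :
  normM M (x - y) = normM M (y - x).
Proof. by rewrite /normM -opprB mulmxN dotvNl dotvNr opprK. Qed.

Section SymmetricPositiveDefinite.
Variables (R : realType) (k : nat) (M : 'M[R]_k).
Hypothesis sM : spd M.
Implicit Types (x y z w : 'cV[R]_k).

Lemma spd_sym x y : dotv (M *m x) y = dotv x (M *m y).
Proof. by case: sM => Ms _; rewrite dotv_mulmx Ms. Qed.

Lemma spd_ge0 x : 0 <= dotv (M *m x) x.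
Proof.
have [->|x0] := eqVneq x 0; first by rewrite mulmx0 dotv0l.
by case: sM => _ /(_ x x0) /ltW.
Qed.

Lemma spd_unitmx : M \in unitmx.
Proof.
case: sM => Ms Mpos; rewrite unitmxE unitfE; apply/negP => /det0P [v v0 vM].
have /Mpos : v^T != 0 by rewrite trmx_eq0.
by rewrite -{1}Ms -trmx_mul vM trmx0 dotv0l ltxx.
Qed.

Lemma spd_inv : spd (invmx M).
Proof.
case: sM => Ms _; split; first by rewrite trmx_inv Ms.
move=> x x0; rewrite -{2}(mulKVmx spd_unitmx x) dotvC.
case: sM => _; apply; apply: contra x0 => /eqP/(congr1 (mulmx M)).
by rewrite mulKVmx ?spd_unitmx // mulmx0 => ->.
Qed.

Lemma spd_polarization x y :
  dotv (M *m (x + y)) (x + y) =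
  dotv (M *m x) x + 2 * dotv (M *m x) y + dotv (M *m y) y.
Proof. exact/sym_polarization/(proj1 sM). Qed.

Lemma normM_sqr x : normM M x ^+ 2 = dotv (M *m x) x.
Proof. by rewrite sqr_sqrtr // spd_ge0. Qed.

Lemma spd_three_point x y z :
  dotv (M *m (x - z)) (x - z) - dotv (M *m (y - z)) (y - z) =
  2 * dotv (M *m (x - y)) (x - z) - dotv (M *m (x - y)) (x - y).
Proof.
have -> : y - z = (x - z) + (-1) *: (x - y).
  by rewrite scaleN1r [RHS]addrC opprB addrA subrK.
rewrite (spd_polarization (x - z)) -scalemxAr !dotvZl !dotvZr (spd_sym (x - z) (x - y)).
rewrite (dotvC (x - z)); lra.
Qed.

Lemma spd_cauchy_schwarz x y : dotv (M *m x) y <= normM M x * normM M y.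
Proof.
have [->|y0] := eqVneq y 0; first by rewrite dotv0r /normM mulmx0 dotv0l sqrtr0 mulr0.
set a := dotv (M *m x) x; set b := dotv (M *m y) y; set c := dotv (M *m x) y.
have b0 : 0 < b by case: sM => _; apply.
have : 0 <= dotv (M *m (x + (- c / b) *: y)) (x + (- c / b) *: y) by exact: spd_ge0.
rewrite spd_polarization -!scalemxAr !dotvZl !dotvZr -/a -/b -/c => quad.
have disc : c ^+ 2 <= a * b.
  have := mulr_ge0 (ltW b0) quad.
  have -> : b * (a + 2 * (- c / b * c) + - c / b * (- c / b * b)) = a * b - c ^+ 2.
    by field; rewrite lt0r_neq0.
  by rewrite subr_ge0.
rewrite -sqrtrM ?spd_ge0 //; apply: le_trans (ler_norm c) _.
by rewrite -sqrtr_sqr ler_sqrt // mulr_ge0 ?spd_ge0.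
Qed.

Lemma spd_cauchy_schwarz_dual w z : dotv w z <= normM (invmx M) w * normM M z.
Proof.
have uM := spd_unitmx.
rewrite -{1}(mulKVmx uM w); apply: le_trans (spd_cauchy_schwarz _ _) _.
by rewrite {1}/normM (mulKVmx uM) dotvC.
Qed.

End SymmetricPositiveDefinite.

Lemma quad_ge0_lin_eq0 (R : realType) (b c : R) :
  (forall t, 0 <= t * c + t ^+ 2 * b) -> c = 0.
Proof.
move=> quad; set d := `|b| + 1.
have d0 : 0 < d by rewrite ltr_pwDr ?normr_ge0.
have := mulr_ge0 (sqr_ge0 d) (quad (- c / d)).
have -> : d ^+ 2 * (- c / d * c + (- c / d) ^+ 2 * b) = c ^+ 2 * (b - d).
  by field; rewrite lt0r_neq0.
have : b - d < 0 by rewrite /d; have := ler_norm b; have := normr_ge0 b; lra.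
move=> neg prod_ge0; have c2_le0 : c ^+ 2 <= 0 by have := sqr_ge0 c; nra.
by apply/eqP; rewrite -sqrf_eq0 eq_le c2_le0 sqr_ge0.
Qed.

Section Convexity.
Variables (R : realType) (k : nat).
Variables (g : 'cV[R]_k -> R) (gg : 'cV[R]_k -> 'cV[R]_k).
Hypothesis Cg : C1_with_grad g gg.
Hypothesis cvx : convex_fun g.

Lemma convex_bregman_ge0 y x : 0 <= bregman g gg y x.
Proof.
have [dg _] := Cg; have [dgx dgxE] := dg x (y - x).
set q := fun t : R => t^-1 *: ((g \o shift x) (t *: (y - x)) - g x).
have q_cvg : q t @[t --> 0^'+] --> dotv (gg x) (y - x).
  by apply: cvg_dnbhs_at_right; rewrite -dgxE; exact: dgx.
rewrite /bregman -(cvg_lim _ q_cvg) // subr_ge0.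
apply: limr_le; first by apply/cvg_ex; eexists; exact: q_cvg.
near=> t.
have t0 : 0 < t by near: t; exact: nbhs_right_gt.
have t1 : t <= 1 by apply: ltW; near: t; exact: nbhs_right_lt.
rewrite /q /= /shift.
have -> : t *: (y - x) + x = t *: y + (1 - t) *: x.
  by rewrite scalerBr scalerBl scale1r addrA addrAC [_ + x]addrC addrA [x + _]addrC.
have := cvx y x (t := t); rewrite t1 ltW //= => /(_ isT) cvx_t.
by rewrite -ler_pdivlMl ?invr_gt0 // invrK; lra.
Unshelve. all: end_near.
Qed.

Section Smooth.
Variable M : 'M[R]_k.
Hypothesis sM : spd M.
Hypothesis smooth : forall y x, bregman g gg y x <= 1 / 2 * dotv (M *m (y - x)) (y - x).

(* Nonnegativity of the divergence at the point [y - M^-1 (gg y - gg x)]. *)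
Lemma bregman_ge_grad_gap y x :
  1 / 2 * dotv (gg y - gg x) (invmx M *m (gg y - gg x)) <= bregman g gg y x.
Proof.
have uM := spd_unitmx sM.
set w := gg y - gg x; set z := y - invmx M *m w.
have := convex_bregman_ge0 z x; have := smooth z y; rewrite /bregman.
have -> : z - y = - (invmx M *m w) by rewrite /z addrAC subrr add0r.
have -> : z - x = (y - x) - invmx M *m w by rewrite /z addrAC.
rewrite mulmxN dotvNl dotvNr opprK (mulKVmx uM) !dotvBr !dotvNr.
have : dotv (gg y) (invmx M *m w) - dotv (gg x) (invmx M *m w) = dotv w (invmx M *m w).
  by rewrite /w dotvBl.
lra.
Qed.

Lemma grad_cocoercive y x :
  dotv (gg y - gg x) (invmx M *m (gg y - gg x)) <= dotv (gg y - gg x) (y - x).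
Proof.
have := bregman_ge_grad_gap y x; have := bregman_ge_grad_gap x y.
rewrite /bregman -(opprB (gg y)) mulmxN dotvNl dotvNr opprK -(opprB y x).
rewrite !dotvNr !dotvBl; lra.
Qed.

End Smooth.
End Convexity.

Lemma S11_smooth (R : realType) k (M : 'M[R]_k) mu L g gg :
  spd M -> S11 M mu L g gg -> L <= 1 ->
  forall y x, bregman g gg y x <= 1 / 2 * dotv (M *m (y - x)) (y - x).
Proof.
move=> sM gS11 L1 y x; have [_ ub] := gS11 x y.
apply: le_trans ub _; rewrite normMB normM_sqr //.
by have := spd_ge0 sM (y - x); nra.
Qed.

Lemma strongly_convex_grad_monotone (R : realType) k (M : 'M[R]_k) mu g gg :
  spd M -> strongly_convex_wrt M mu g gg ->
  forall x y, mu * dotv (M *m (y - x)) (y - x) <= dotv (gg y - gg x) (y - x).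
Proof.
move=> sM gsc x y; have := gsc y x; have := gsc x y.
rewrite normMB /bregman !normM_sqr // -(opprB y x) dotvNr dotvBl; lra.
Qed.

Lemma minimizer_grad_eq0 (R : realType) k (phi : 'cV[R]_k -> R) x d C :
  (forall y, phi x <= phi y) ->
  (forall v t, phi (x + t *: v) <= phi x + t * dotv d v + t ^+ 2 * C v) ->
  d = 0.
Proof.
move=> xmin expand; apply/eqP; rewrite -dotv_eq0; apply/eqP.
apply: (@quad_ge0_lin_eq0 _ (C d)) => t.
have := xmin (x + t *: d); have := expand d t; lra.
Qed.

Lemma strongly_convex_le_lipschitz (R : realType) k (M : 'M[R]_k) mu L g gg
    (x : 'cV[R]_k) :
  spd M -> strongly_convex_wrt M mu g gg -> lipschitz_wrt M (invmx M) gg L ->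
  x != 0 -> mu <= L.
Proof.
move=> sM gsc glip x0.
have qx : 0 < dotv (M *m x) x by case: sM => _; apply.
have := strongly_convex_grad_monotone sM gsc 0 x; rewrite !subr0 => mono.
rewrite -(ler_pM2r qx); apply: le_trans mono _.
apply: le_trans (spd_cauchy_schwarz_dual sM _ _) _.
rewrite -(normM_sqr sM) expr2 mulrA; apply: ler_wpM2r; first exact: normM_ge0.
by have := glip x 0; rewrite subr0.
Qed.

Section QuadraticForms.
Variables (R : realType) (n : nat).

Lemma quad_form_continuous (A : 'M[R]_n) :
  continuous (fun w : 'rV[R]_n => dotv (A *m w^T) w^T).
Proof.
have sum_cont (I : Type) (s : seq I) (F : I -> 'rV[R]_n -> R) :
    (forall i, continuous (F i)) -> continuous (fun w => \sum_(i <- s) F i w).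
  move=> Fcont; elim: s => [|i s IHs]; under eq_fun do rewrite ?big_nil ?big_cons.
    exact: cst_continuous.
  by move=> w; apply: continuousD; [exact: Fcont | exact: IHs].
have -> : (fun w : 'rV[R]_n => dotv (A *m w^T) w^T) =
    (fun w => \sum_(j < n) (\sum_(l < n) A j l * w 0 l) * w 0 j).
  apply/funext => w; rewrite /dotv mxE; apply: eq_bigr => j _; rewrite !mxE.
  by congr (_ * _); apply: eq_bigr => l _; rewrite !mxE.
apply: (sum_cont _ _ (fun j w => (\sum_(l < n) A j l * w 0 l) * w 0 j)) => j w.
apply: continuousM; last exact: coord_continuous.
apply: (sum_cont _ _ (fun l w => A j l * w 0 l)) => l {}w.
apply: continuousM; first exact: cst_continuous.
exact: coord_continuous.
Qed.

Lemma quad_formZ (A : 'M[R]_n) a (x : 'cV[R]_n) :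
  dotv (A *m (a *: x)) (a *: x) = a ^+ 2 * dotv (A *m x) x.
Proof. by rewrite -scalemxAr dotvZl dotvZr mulrA -expr2. Qed.

Lemma psd_quad_form_eq0 (M : 'M[R]_n) (x : 'cV[R]_n) :
  M^T = M -> (forall y, 0 <= dotv (M *m y) y) -> dotv (M *m x) x = 0 -> M *m x = 0.
Proof.
move=> Ms Mpsd Mx0; apply/eqP; rewrite -dotv_eq0; apply/eqP.
suff : 2 * dotv (M *m x) (M *m x) = 0 by move/eqP; rewrite mulf_eq0 pnatr_eq0 => /eqP.
apply: (@quad_ge0_lin_eq0 _ (dotv (M *m (M *m x)) (M *m x))) => t.
have := Mpsd (x + t *: (M *m x)).
by rewrite sym_polarization // Mx0 quad_formZ dotvZr; lra.
Qed.

Lemma unit_sphere_compact : compact [set w : 'rV[R]_n | `|w| = 1].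
Proof.
apply: bounded_closed_compact.
  by exists 1; split; [rewrite num_real | move=> r r1 w /= ->; apply: ltW].
have -> : [set w : 'rV[R]_n | `|w| = 1] = (@Num.norm _ _) @^-1` [set r | r = 1] by [].
by apply: (proj1 (continuous_closedP _)); [exact: norm_continuous | exact: closed_eq].
Qed.

Variables (G Q : 'M[R]_n).
Hypothesis sQ : spd Q.

(* The Rayleigh quotient is 0-homogeneous, so its maximum over the compact
   unit sphere is a global maximum. *)
Lemma rayleigh_quotient_max : (exists v : 'cV[R]_n, v != 0) ->
  exists2 c : 'cV[R]_n, c != 0 &
    forall x, dotv (G *m x) x * dotv (Q *m c) c <= dotv (G *m c) c * dotv (Q *m x) x.
Proof.
move=> [v v0].
pose rq (w : 'rV[R]_n) := dotv (G *m w^T) w^T / dotv (Q *m w^T) w^T.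
have Q_pos (w : 'rV[R]_n) : w != 0 -> 0 < dotv (Q *m w^T) w^T.
  by move=> w0; case: sQ => _; apply; rewrite trmx_eq0.
pose S := [set w : 'rV[R]_n | `|w| = 1].
have S_ne0 w : S w -> w != 0 by rewrite /S /= -normr_eq0 => ->; rewrite oner_neq0.
have S0 : S !=set0 by exists (`|v^T|^-1 *: v^T); rewrite /S /= normfZV ?trmx_eq0.
have rq_cont : {within S, continuous rq}.
  apply: continuous_in_subspaceT => w; rewrite inE => /S_ne0 w0.
  apply: (@continuousM _ _ (fun w => dotv (G *m w^T) w^T)
    (fun w => (dotv (Q *m w^T) w^T)^-1)); first exact: quad_form_continuous.
  by apply: continuousV; [rewrite lt0r_neq0 ?Q_pos | exact: quad_form_continuous].
have [c0 /set_mem/S_ne0 c00 c0max] := EVT_max_rV S0 unit_sphere_compact rq_cont.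
exists c0^T; first by rewrite trmx_eq0.
move=> x; have [->|x0] := eqVneq x 0; first by rewrite !mulmx0 !dotv0l mul0r mulr0.
have xT0 : x^T != 0 by rewrite trmx_eq0.
have := c0max _ (mem_set (normfZV xT0)).
rewrite /rq linearZ /= !quad_formZ trmxK.
have s0 : `|x^T|^-1 ^+ 2 != 0 by rewrite expf_eq0 invr_eq0 normr_eq0 (negPf xT0).
have qx := Q_pos _ xT0; have qc := Q_pos _ c00; rewrite trmxK in qx.
by rewrite invfM mulrACA mulfV // mul1r ler_pdivrMr // mulrAC ler_pdivlMr.
Qed.

Hypotheses (Gs : G^T = G) (Gpsd : forall x, 0 <= dotv (G *m x) x).

(* A maximiser [c] of the Rayleigh quotient [lam0] solves [G c = lam0 Q c], so
   [lam0] is an eigenvalue of [Q^-1 G], with left eigenvector [(Q c)^T]. *)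
Lemma lambda_max_rayleigh lam : lambda_max (invmx Q *m G) lam ->
  0 <= lam /\ forall x, dotv (G *m x) x <= lam * dotv (Q *m x) x.
Proof.
move=> [/eigenvalueP [v _ v0] lam_max]; have uQ := spd_unitmx sQ.
have vT0 : v^T != 0 by rewrite trmx_eq0.
have [c c0 cmax] := rayleigh_quotient_max (ex_intro (fun w => w != 0) _ vT0).
have qc : 0 < dotv (Q *m c) c by case: sQ => _; apply.
set lam0 := dotv (G *m c) c / dotv (Q *m c) c.
have lam0_ge0 : 0 <= lam0 by rewrite divr_ge0 ?Gpsd ?ltW.
have G_le x : dotv (G *m x) x <= lam0 * dotv (Q *m x) x.
  by rewrite mulrAC ler_pdivlMr // cmax.
have Gc : G *m c = lam0 *: (Q *m c).
  set N := lam0 *: Q - G.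
  suff : N *m c = 0 by rewrite mulmxBl -scalemxAl => /eqP; rewrite subr_eq0 => /eqP.
  apply: psd_quad_form_eq0.
  - by rewrite /N linearB linearZ /= Gs (proj1 sQ).
  - by move=> y; rewrite mulmxBl -scalemxAl dotvBl dotvZl subr_ge0.
  - by rewrite mulmxBl -scalemxAl dotvBl dotvZl /lam0 mulfVK ?lt0r_neq0 // subrr.
have : eigenvalue (invmx Q *m G) lam0.
  apply/eigenvalueP; exists (Q *m c)^T.
    rewrite trmx_mul (proj1 sQ) -mulmxA (mulKVmx uQ) -{1}Gs -trmx_mul Gc linearZ /=.
    by rewrite trmx_mul (proj1 sQ).
  rewrite trmx_eq0; apply: contra c0 => /eqP/(congr1 (mulmx (invmx Q))).
  by rewrite mulKmx // mulmx0 => ->.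
move=> /lam_max lam0_le; split; first exact: le_trans lam0_le.
move=> x; apply: le_trans (G_le x) _; apply: ler_wpM2r lam0_le.
exact: spd_ge0.
Qed.

End QuadraticForms.

Lemma schur_lambda_max_bound (R : realType) m n (B : 'M[R]_(n, m)) IV IQ LS2 :
  spd IV -> spd IQ -> lambda_max (invmx IQ *m B *m invmx IV *m B^T) LS2 ->
  0 <= LS2 /\ forall q, dotv (B *m invmx IV *m B^T *m q) q <= LS2 * dotv (IQ *m q) q.
Proof.
move=> sV sQ LS2_max; apply: (lambda_max_rayleigh sQ); rewrite ?mulmxA //.
- by rewrite !trmx_mul trmxK (proj1 (spd_inv sV)) mulmxA.
- by move=> q; rewrite -!mulmxA dotv_mulmx; apply/spd_ge0/spd_inv.
Qed.

Section PrimalStep.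
Variables (R : realType) (m n : nat) (B : 'M[R]_(n, m)).
Variables (f : 'cV[R]_m -> R) (gf : 'cV[R]_m -> 'cV[R]_m) (gh : 'cV[R]_n -> 'cV[R]_n).
Variables (TU IV : 'M[R]_m) (TP : 'M[R]_n).
Hypotheses (sV : spd IV) (sP : spd TP).
Hypothesis f_smooth :
  forall y x, bregman f gf y x <= 1 / 2 * dotv (TU *m (y - x)) (y - x).

Lemma tfB_expansion alpha u0 p1 u v t : 0 < alpha ->
  tfB f gh B TP IV alpha u0 p1 (u + t *: v) <=
  tfB f gh B TP IV alpha u0 p1 u
  + t * dotv (grad_fB gf B TP u + alpha^-1 *: (IV *m (u - u0)) + B^T *m eU gh TP p1) v
  + t ^+ 2 * (1 / 2 * dotv (TU *m v) v + 1 / 2 * dotv (B^T *m invmx TP *m B *m v) v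
              + 1 / (2 * alpha) * dotv (IV *m v) v).
Proof.
move=> alpha0; have uV := spd_unitmx sV.
have Bq_sym : (B^T *m invmx TP *m B)^T = B^T *m invmx TP *m B.
  by rewrite !trmx_mul trmxK (proj1 (spd_inv sP)) mulmxA.
have := f_smooth (u + t *: v) u; rewrite /tfB /fB /bregman -/(eU gh TP p1).
have -> : u + t *: v - u = t *: v by rewrite addrAC subrr add0r.
set w := u - u0 + alpha *: (invmx IV *m B^T *m eU gh TP p1).
have -> : u + t *: v - u0 + alpha *: (invmx IV *m B^T *m eU gh TP p1) = w + t *: v.
  by rewrite /w (addrAC u (t *: v)) (addrAC (u - u0) (t *: v)).
have IVw : dotv (IV *m w) v = dotv (IV *m (u - u0)) v + alpha * dotv (B^T *m eU gh TP p1) v.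
  by rewrite mulmxDr dotvDl -scalemxAr dotvZl -!mulmxA (mulKVmx uV).
rewrite !(normM_sqr sV) (spd_polarization sV) (sym_polarization _ _ Bq_sym).
rewrite /grad_fB !quad_formZ !dotvZr !dotvDl dotvZl IVw.
set a := dotv (IV *m (u - u0)) v; set b := dotv (B^T *m eU gh TP p1) v.
set X := dotv (IV *m w) w; set Y := dotv (IV *m v) v.
have -> : 1 / (2 * alpha) * (X + 2 * (t * (a + alpha * b)) + t ^+ 2 * Y) =
    1 / (2 * alpha) * X + t * (alpha^-1 * a) + t * b + t ^+ 2 * (1 / (2 * alpha) * Y).
  by field; rewrite lt0r_neq0.
lra.
Qed.

Lemma tfB_optimality alpha u0 p1 u1 : 0 < alpha ->
  (forall v, tfB f gh B TP IV alpha u0 p1 u1 <= tfB f gh B TP IV alpha u0 p1 v) ->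
  grad_fB gf B TP u1 + alpha^-1 *: (IV *m (u1 - u0)) + B^T *m eU gh TP p1 = 0.
Proof.
by move=> alpha0 u1min; apply: minimizer_grad_eq0 u1min _ => v t; exact: tfB_expansion.
Qed.

End PrimalStep.

Section SaddleOperator.
Variables (R : realType) (m n : nat) (B : 'M[R]_(n, m)).
Variables (f : 'cV[R]_m -> R) (gf : 'cV[R]_m -> 'cV[R]_m).
Variables (h : 'cV[R]_n -> R) (gh : 'cV[R]_n -> 'cV[R]_n).
Variables (TU IV : 'M[R]_m) (TP IQ : 'M[R]_n) (mu_fB mu_hB : R).
Hypotheses (sU : spd TU) (sV : spd IV) (sP : spd TP) (sQ : spd IQ).
Hypotheses (Cf : C1_with_grad f gf) (cvf : convex_fun f).
Hypotheses (Ch : C1_with_grad h gh) (cvh : convex_fun h).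
Hypothesis f_smooth :
  forall y x, bregman f gf y x <= 1 / 2 * dotv (TU *m (y - x)) (y - x).
Hypothesis h_smooth :
  forall y x, bregman h gh y x <= 1 / 2 * dotv (TP *m (y - x)) (y - x).
Hypothesis fB_sc : strongly_convex_wrt IV mu_fB (fB f B TP) (grad_fB gf B TP).
Hypothesis hB_sc : strongly_convex_wrt IQ mu_hB (hB h B TU) (grad_hB gh B TU).

(* The cross terms [(p - p', B (u - u'))] cancel; the terms involving [T_P^-1] and
   [T_U^-1] are absorbed by co-coercivity of [gh] and [gf] into two squares. *)
Lemma saddle_operator_coercive u u' p p' :
  mu_fB / 2 * dotv (IV *m (u - u')) (u - u') + mu_hB / 2 * dotv (IQ *m (p - p')) (p - p')
  <= dotv (grad_fB gf B TP u - grad_fB gf B TP u') (u - u')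
     + dotv (eU gh TP p - eU gh TP p') (B *m (u - u'))
     + dotv (grad_hB gh B TU p - grad_hB gh B TU p') (p - p')
     - dotv (eU gf TU u - eU gf TU u') (B^T *m (p - p')).
Proof.
have := strongly_convex_grad_monotone sV fB_sc u' u.
have := strongly_convex_grad_monotone sQ hB_sc p' p.
have := grad_cocoercive Cf cvf sU f_smooth u u'.
have := grad_cocoercive Ch cvh sP h_smooth p p'.
set du := u - u'; set dp := p - p'.
set F := gf u - gf u'; set H := gh p - gh p'.
have -> : grad_fB gf B TP u - grad_fB gf B TP u' = F + B^T *m (invmx TP *m (B *m du)).
  by rewrite /grad_fB opprD addrACA -mulmxBr !mulmxA.
have -> : grad_hB gh B TU p - grad_hB gh B TU p' = H + B *m (invmx TU *m (B^T *m dp)).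
  by rewrite /grad_hB opprD addrACA -mulmxBr !mulmxA.
have -> : eU gh TP p - eU gh TP p' = dp - invmx TP *m H.
  by rewrite /eU opprD addrACA -opprD -mulmxBr.
have -> : eU gf TU u - eU gf TU u' = du - invmx TU *m F.
  by rewrite /eU opprD addrACA -opprD -mulmxBr.
clearbody du dp F H.
have := spd_ge0 (spd_inv sP) (B *m du - H).
have := spd_ge0 (spd_inv sU) (F + B^T *m dp).
rewrite mulmxBr mulmxDr !(dotvDl, dotvDr, dotvNl, dotvNr).
rewrite (spd_sym (spd_inv sU) (B^T *m dp) F) (dotvC (B^T *m dp)) (dotvC (invmx TU *m F) F).
rewrite (spd_sym (spd_inv sP) (B *m du) H) (dotvC (B *m du) (invmx TP *m H)).
rewrite (dotvC (invmx TP *m H) H) (dotv_mulmx B^T) (dotv_mulmx B) trmxK.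
rewrite (dotvC dp (B *m du)) (dotv_mulmx B du); lra.
Qed.

End SaddleOperator.

Lemma dual_step_residual (R : realType) m n (B : 'M[R]_(n, m)) gf gh TU u0 p0 :
  gh p0 - B *m (u0 - invmx TU *m (gf u0 + B^T *m p0)) =
  grad_hB gh B TU p0 - B *m eU gf TU u0.
Proof.
rewrite /grad_hB /eU !(mulmxDr, mulmxN) !mulmxA.
move: (gh p0) (B *m u0) (B *m invmx TU *m gf u0) (B *m invmx TU *m B^T *m p0) => x a b c.
by apply/matrixP => i j; rewrite !mxE; ring.
Qed.

Lemma young_cross (R : realType) (alpha c L X Y : R) :
  0 <= alpha -> c <= L * X * Y ->
  alpha * c <= X ^+ 2 / 2 + alpha ^+ 2 * L ^+ 2 * Y ^+ 2 / 2.
Proof.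
move=> alpha0 cle; have := ler_wpM2l alpha0 cle.
have := sqr_ge0 (X - alpha * L * Y); nra.
Qed.

Lemma dotv_subr_split (R : realType) k (x y z w : 'cV[R]_k) :
  dotv (y - z) w = dotv (x - z) w - dotv (x - y) w.
Proof. by rewrite !dotvBl; ring. Qed.

Section Iteration.
Variables (R : realType) (m n : nat) (B : 'M[R]_(n, m)).
Variables (f : 'cV[R]_m -> R) (gf : 'cV[R]_m -> 'cV[R]_m).
Variables (h : 'cV[R]_n -> R) (gh : 'cV[R]_n -> 'cV[R]_n).
Variables (TU IV : 'M[R]_m) (TP IQ : 'M[R]_n) (us : 'cV[R]_m) (ps : 'cV[R]_n).
Hypotheses (saddle_u : gf us + B^T *m ps = 0) (saddle_p : B *m us = gh ps).

Lemma saddle_grad_fB : grad_fB gf B TP us + B^T *m eU gh TP ps = 0.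
Proof. by rewrite /grad_fB /eU -!mulmxA saddle_p mulmxBr -addrA subrKC. Qed.

Lemma saddle_grad_hB : grad_hB gh B TU ps = B *m eU gf TU us.
Proof.
rewrite /grad_hB /eU.
have -> : gf us = - (B^T *m ps) by apply/eqP; rewrite -addr_eq0 saddle_u.
by rewrite mulmxBr !mulmxN opprK saddle_p !mulmxA.
Qed.

Variables (mu_fB mu_hB L_hB L_eU LS2 : R).
Hypotheses (sU : spd TU) (sV : spd IV) (sP : spd TP) (sQ : spd IQ).
Hypotheses (Cf : C1_with_grad f gf) (cvf : convex_fun f).
Hypotheses (Ch : C1_with_grad h gh) (cvh : convex_fun h).
Hypothesis f_smooth :
  forall y x, bregman f gf y x <= 1 / 2 * dotv (TU *m (y - x)) (y - x).
Hypothesis h_smooth :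
  forall y x, bregman h gh y x <= 1 / 2 * dotv (TP *m (y - x)) (y - x).
Hypothesis fB_sc : strongly_convex_wrt IV mu_fB (fB f B TP) (grad_fB gf B TP).
Hypothesis hB_sc : strongly_convex_wrt IQ mu_hB (hB h B TU) (grad_hB gh B TU).
Hypothesis hB_lip : lipschitz_wrt IQ (invmx IQ) (grad_hB gh B TU) L_hB.
Hypothesis eU_lip : lipschitz_wrt IV IV (eU gf TU) L_eU.
Hypothesis LS2_bound :
  forall q, dotv (B *m invmx IV *m B^T *m q) q <= LS2 * dotv (IQ *m q) q.
Hypothesis mu_fB_gt0 : 0 < mu_fB.
Variables (alpha : R) (u0 u1 : 'cV[R]_m) (p0 p1 : 'cV[R]_n).
Hypothesis alpha_gt0 : 0 < alpha.
Hypothesis dual_step :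
  p1 = p0 - alpha *: (invmx IQ *m
         (gh p0 - B *m (u0 - invmx TU *m (gf u0 + B^T *m p0)))).
Hypothesis primal_step :
  forall v, tfB f gh B TP IV alpha u0 p1 u1 <= tfB f gh B TP IV alpha u0 p1 v.

Lemma primal_error_identity :
  dotv (IV *m (u1 - u0)) (u1 - us) =
  - alpha * (dotv (grad_fB gf B TP u1 - grad_fB gf B TP us) (u1 - us)
             + dotv (eU gh TP p1 - eU gh TP ps) (B *m (u1 - us))).
Proof.
have opt := tfB_optimality sV sP f_smooth alpha_gt0 primal_step.
have sad := saddle_grad_fB.
move: opt sad; set g1 := grad_fB _ _ _ u1; set gs := grad_fB _ _ _ us.
set e1 := eU gh TP p1; set es := eU gh TP ps; set du := u1 - us.
clearbody g1 gs e1 es.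
move=> /(congr1 (fun x => dotv x du)) opt /(congr1 (fun x => dotv x du)) sad.
move: opt sad; rewrite !dotvDl !dotvNl !dotv0l dotvZl !(dotv_mulmx B^T) trmxK.
set X := dotv (IV *m (u1 - u0)) du => opt sad.
have aX : alpha^-1 * X = - (dotv g1 du + dotv e1 (B *m du))
  + (dotv gs du + dotv es (B *m du)) by lra.
by rewrite -[X](mulVKf (lt0r_neq0 alpha_gt0)) aX; ring.
Qed.

Lemma dual_error_identity :
  dotv (IQ *m (p1 - p0)) (p1 - ps) =
  - alpha * (dotv (grad_hB gh B TU p0 - grad_hB gh B TU ps) (p1 - ps)
             - dotv (eU gf TU u0 - eU gf TU us) (B^T *m (p1 - ps))).
Proof.
have -> : IQ *m (p1 - p0) = - alpha *: (grad_hB gh B TU p0 - B *m eU gf TU u0).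
  rewrite {1}dual_step addrAC subrr add0r mulmxN -scalemxAr (mulKVmx (spd_unitmx sQ)).
  by rewrite dual_step_residual scaleNr.
rewrite dotvZl saddle_grad_hB; congr (_ * _).
set g0 := grad_hB _ _ _ p0; set e0 := eU gf TU u0; set es := eU gf TU us.
clearbody g0 e0 es; rewrite !dotvBl !(dotv_mulmx B); ring.
Qed.

Lemma lyap_contraction :
  Lyap IV IQ us ps u1 p1
    * (1 + alpha * Num.min mu_fB (mu_hB - alpha * (L_hB ^+ 2 + L_eU ^+ 2 * LS2)))
  <= Lyap IV IQ us ps u0 p0.
Proof.
have alpha_ge0 := ltW alpha_gt0.
have coer := saddle_operator_coercive sU sV sP sQ Cf cvf Ch cvh f_smooth h_smooth
  fB_sc hB_sc u1 us p1 ps.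
have err_u := primal_error_identity.
have err_p := dual_error_identity.
rewrite (dotv_subr_split (grad_hB gh B TU p1)) (dotv_subr_split (eU gf TU u1)) in err_p.
have three_u := spd_three_point sV u1 u0 us.
have three_p := spd_three_point sQ p1 p0 ps.
have young_h : alpha * dotv (grad_hB gh B TU p1 - grad_hB gh B TU p0) (p1 - ps) <=
    normM IQ (p1 - p0) ^+ 2 / 2 + alpha ^+ 2 * L_hB ^+ 2 * normM IQ (p1 - ps) ^+ 2 / 2.
  apply: young_cross alpha_ge0 _; apply: le_trans (spd_cauchy_schwarz_dual sQ _ _) _.
  by apply: ler_wpM2r; [exact: normM_ge0 | exact: hB_lip].
have young_e : alpha * - dotv (eU gf TU u1 - eU gf TU u0) (B^T *m (p1 - ps)) <=
    normM IV (u1 - u0) ^+ 2 / 2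
    + alpha ^+ 2 * L_eU ^+ 2 * normM (invmx IV) (B^T *m (p1 - ps)) ^+ 2 / 2.
  apply: young_cross alpha_ge0 _; rewrite -dotvNl opprB dotvC.
  apply: le_trans (spd_cauchy_schwarz_dual sV _ _) _; rewrite mulrC.
  apply: ler_wpM2r; first exact: normM_ge0.
  by rewrite [normM IV (u1 - u0)]normMB; exact: eU_lip.
have BT_bound :
    normM (invmx IV) (B^T *m (p1 - ps)) ^+ 2 <= LS2 * normM IQ (p1 - ps) ^+ 2.
  rewrite (normM_sqr (spd_inv sV)) (normM_sqr sQ) dotvC (dotv_mulmx B^T) trmxK dotvC.
  by rewrite !mulmxA LS2_bound.
have BT_term := ler_wpM2l (mulr_ge0 (sqr_ge0 alpha) (sqr_ge0 L_eU)) BT_bound.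
rewrite /Lyap !(normM_sqr sV) !(normM_sqr sQ) in young_h young_e BT_term *.
set mk := Num.min _ _.
have mk_a : alpha * (mk * dotv (IV *m (u1 - us)) (u1 - us))
    <= alpha * (mu_fB * dotv (IV *m (u1 - us)) (u1 - us)).
  by rewrite ler_wpM2l // ler_wpM2r ?spd_ge0 // ge_min lexx.
have mk_b : alpha * (mk * dotv (IQ *m (p1 - ps)) (p1 - ps))
    <= alpha * ((mu_hB - alpha * (L_hB ^+ 2 + L_eU ^+ 2 * LS2))
                * dotv (IQ *m (p1 - ps)) (p1 - ps)).
  by rewrite ler_wpM2l // ler_wpM2r ?spd_ge0 // ge_min lexx orbT.
have := ler_wpM2l alpha_ge0 coer.
lra.
Qed.

Lemma lyap_rate : 0 <= LS2 -> alpha < mu_hB / (L_hB ^+ 2 + L_eU ^+ 2 * LS2) ->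
  Lyap IV IQ us ps u1 p1
  <= 1 / (1 + alpha * Num.min mu_fB (mu_hB - alpha * (L_hB ^+ 2 + L_eU ^+ 2 * LS2)))
     * Lyap IV IQ us ps u0 p0.
Proof.
set LSQ2 := L_hB ^+ 2 + L_eU ^+ 2 * LS2 => LS2_ge0 alpha_lt.
have LSQ2_gt0 : 0 < LSQ2.
  have LSQ2_ge0 : 0 <= LSQ2 by rewrite addr_ge0 ?sqr_ge0 // mulr_ge0 ?sqr_ge0.
  rewrite lt_def LSQ2_ge0 andbT.
  by apply: contraTneq alpha_lt => LSQ2_0; rewrite LSQ2_0 invr0 mulr0 -leNgt ltW.
have mk_gt0 : 0 < Num.min mu_fB (mu_hB - alpha * LSQ2).
  by rewrite lt_min mu_fB_gt0 subr_gt0 -ltr_pdivlMr.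
rewrite div1r mulrC ler_pdivlMr ?lyap_contraction //.
by rewrite addr_gt0 ?mulr_gt0.
Qed.

End Iteration.

Unset Implicit Arguments. Set Strict Implicit.

Theorem theorem5p6 (R : realType) (m n : nat) (B : 'M[R]_(n, m))
    (f : 'cV[R]_m -> R) (gf : 'cV[R]_m -> 'cV[R]_m)
    (h : 'cV[R]_n -> R) (gh : 'cV[R]_n -> 'cV[R]_n)
    (TU IV : 'M[R]_m) (TP IQ : 'M[R]_n)
    (us : 'cV[R]_m) (ps : 'cV[R]_n)
    (mu_hTP L_hTP mu_fTU L_fTU mu_fB mu_hB L_hB L_eU LS2 : R)
    (u : nat -> 'cV[R]_m) (p : nat -> 'cV[R]_n) (alpha : nat -> R) :
  (n <= m)%N ->
  \rank B = n ->
  C1_with_grad f gf -> convex_fun f -> lipschitz_grad gf ->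
  C1_with_grad h gh -> convex_fun h -> lipschitz_grad gh ->
  (* (us, ps) is a saddle point of L(u,p) = f(u) - h(p) + (Bu, p) *)
  gf us + B^T *m ps = 0 -> B *m us = gh ps ->
  spd TU -> spd IV -> spd TP -> spd IQ ->
  S11 TP mu_hTP L_hTP h gh -> L_hTP <= 1 ->
  S11 TU mu_fTU L_fTU f gf -> L_fTU <= 1 ->
  strongly_convex_wrt IV mu_fB (fB f B TP) (grad_fB gf B TP) -> 0 < mu_fB ->
  strongly_convex_wrt IQ mu_hB (hB h B TU) (grad_hB gh B TU) -> 0 < mu_hB ->
  lipschitz_const IQ (invmx IQ) (grad_hB gh B TU) L_hB ->
  lipschitz_const IV IV (eU gf TU) L_eU ->
  lambda_max (invmx IQ *m B *m invmx IV *m B^T) LS2 ->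
  (* the iteration *)
  (forall k, p (k.+1) = p k - alpha k *: (invmx IQ *m
       (gh (p k) - B *m (u k - invmx TU *m (gf (u k) + B^T *m p k))))) ->
  (forall k (v : 'cV[R]_m),
       tfB f gh B TP IV (alpha k) (u k) (p k.+1) (u k.+1)
       <= tfB f gh B TP IV (alpha k) (u k) (p k.+1) v) ->
  let LSQ2 := L_hB ^+ 2 + L_eU ^+ 2 * LS2 in
  (forall k, 0 < alpha k < mu_hB / LSQ2 ->
     Lyap IV IQ us ps (u k.+1) (p k.+1)
     <= 1 / (1 + alpha k * Num.min mu_fB (mu_hB - alpha k * LSQ2))
        * Lyap IV IQ us ps (u k) (p k)) /\
  (forall k, alpha k = 1 / 2 * mu_hB / LSQ2 ->
     Lyap IV IQ us ps (u k.+1) (p k.+1)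
     <= 1 / (1 + 1 / 2 * mu_hB * Num.min mu_fB (mu_hB / 2) / LSQ2)
        * Lyap IV IQ us ps (u k) (p k)).
Proof.
move=> _ _ Cf cvf _ Ch cvh _ saddle_u saddle_p sU sV sP sQ hS11 L_hTP_le1 fS11 L_fTU_le1
  fB_sc mu_fB_gt0 hB_sc mu_hB_gt0 [hB_lip _] [eU_lip _] LS2_max dual_step primal_step LSQ2.
have [LS2_ge0 LS2_bound] := schur_lambda_max_bound sV sQ LS2_max.
have rate k (alpha_k_gt0 : 0 < alpha k) :=
  lyap_rate saddle_u saddle_p sU sV sP sQ Cf cvf Ch cvh (S11_smooth sU fS11 L_fTU_le1)
    (S11_smooth sP hS11 L_hTP_le1) fB_sc hB_sc hB_lip eU_lip LS2_bound mu_fB_gt0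
    alpha_k_gt0 (dual_step k) (primal_step k) LS2_ge0.
split => [k /andP [alpha_k_gt0 alpha_k_lt]|k alpha_k]; first exact: rate.
have /eigenvalueP [v _ v0] := proj1 LS2_max.
have vT0 : v^T != 0 by rewrite trmx_eq0.
have mu_le_L := strongly_convex_le_lipschitz sQ hB_sc hB_lip vT0.
have LSQ2_gt0 : 0 < LSQ2.
  by have := mulr_ge0 (sqr_ge0 L_eU) LS2_ge0; rewrite /LSQ2; nra.
have half_gap : mu_hB - alpha k * LSQ2 = mu_hB / 2.
  by rewrite alpha_k; field; rewrite lt0r_neq0.
have -> : 1 / 2 * mu_hB * Num.min mu_fB (mu_hB / 2) / LSQ2 =
    alpha k * Num.min mu_fB (mu_hB - alpha k * LSQ2).
  by rewrite half_gap alpha_k; field; rewrite lt0r_neq0.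
apply: rate; rewrite alpha_k ?ltr_pM2r ?invr_gt0 //; [nra | lra].
Qed.
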